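(* Let $c\ge 0$ and consider the planar polynomial system $$\dot x=x(1-y+cx),\qquad \dot y=y(-1+x).$$ The unique irreducible Darboux polynomials of this system with non-zero cofactors are $x$ and $y$.
   Context: For the vector field $\mathcal{Z}=x(1-y+cx)\partial_x+y(-1+x)\partial_y$, a Darboux polynomial is $f\in\mathbb{C}[x,y]$ with $\mathcal{Z}f=kf$ for some polynomial $k$ (the cofactor), necessarily of degree at most one. *)

(* Bivariate polynomials C[x,y] are represented as
   {poly {poly C}}: the outer variable is y, the inner variable is x. *)
From HB Require Import structures.
From mathcomp Require Import all_boot all_order all_algebra.
From mathcomp Require Import complex.
From mathcomp Require Import reals.
Set Implicit Arguments. Unset Strict Implicit. Unset Printing Implicit Defensive.
Import Order.TTheory GRing.Theory Num.Theory.
Local Open Scope ring_scope.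
Local Open Scope complex_scope.

Definition varx (C : nzRingType) : {poly {poly C}} := ('X)%:P.
Definition vary (C : nzRingType) : {poly {poly C}} := 'X.
Definition cst2 (C : nzRingType) (a : C) : {poly {poly C}} := a%:P%:P.

Definition dx (C : nzRingType) (f : {poly {poly C}}) : {poly {poly C}} :=
  map_poly (fun p : {poly C} => p^`()) f.
Definition dy (C : nzRingType) (f : {poly {poly C}}) : {poly {poly C}} := f^`().

Definition Zfield (R : realType) (c : R) (f : {poly {poly R[i]}}) : {poly {poly R[i]}} :=
  varx R[i] * (1 - vary R[i] + cst2 (c%:C) * varx R[i]) * dx f
  + vary R[i] * (-1 + varx R[i]) * dy f.

Definition darboux (R : realType) (c : R) (f k : {poly {poly R[i]}}) : Prop :=
  f != 0 /\ Zfield c f = k * f.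

Definition irreducible_elt (A : idomainType) (f : A) : Prop :=
  f != 0 /\ f \isn't a GRing.unit /\
  forall g h : A, f = g * h -> g \is a GRing.unit \/ h \is a GRing.unit.

(* Suppose neither x nor y divides the Darboux polynomial f, let n be its degree
   in y, and write its cofactor as k = k_0(x) + k_1(x) y.  On y = 0 the
   equation Z f = k f reads x (1 + c x) f(x,0)' = k(x,0) f(x,0), so k(0,0) is the
   order of f(x,0) at x = 0; on x = 0 it reads -y f(0,y)' = k(0,y) f(0,y), so
   k(0,y) is the constant minus the order of f(0,y) at y = 0.  Both orders are
   natural numbers, hence k(0,y) = 0.  The coefficient of y^(n+1) then gives
   -x f_n' = k_1 f_n, which forces k_1 = k_1(0) = 0 and f_n constant, so f(0,y)
   has degree n and zero derivative: n = 0 and f is a unit.  Irreducible Darboux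
   polynomials are thus associates of x or y, whatever c and the cofactor are. *)

From HB Require Import structures.
From mathcomp Require Import all_boot all_order all_algebra.
From mathcomp Require Import complex.
From mathcomp Require Import reals.
From mathcomp Require Import ring zify.
Set Implicit Arguments. Unset Strict Implicit. Unset Printing Implicit Defensive.
Import Order.TTheory GRing.Theory Num.Theory.
Local Open Scope ring_scope.
Local Open Scope complex_scope.

Lemma size_Xderiv (C : nzSemiRingType) (p : {poly C}) :
  (size ('X * p^`())%R <= size p)%N.
Proof.
by apply/leq_sizeP => -[|j] hj; rewrite coefXM //= coef_deriv nth_default ?mul0rn.
Qed.

Lemma size_deriv_eq0 (C : numDomainType) (p : {poly C}) :
  p^`() = 0 -> (size p <= 1)%N.
Proof.
move=> dp0; apply/leq_sizeP => -[|j] // _.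
have /eqP := congr1 (coefp j) dp0.
by rewrite /= coef_deriv coef0 mulrn_eq0 => /eqP.
Qed.

Lemma size_Xderiv_cofactor (C : idomainType) (p q : {poly C}) :
  p != 0 -> 'X * p^`() = q * p -> (size q <= 1)%N.
Proof.
move=> p_neq0 Epq; have [-> | q_neq0] := eqVneq q 0; first by rewrite size_poly0.
have := size_Xderiv p; rewrite Epq size_mul // -subn1.
by move: p_neq0 q_neq0; rewrite -!size_poly_gt0; lia.
Qed.

Lemma horner0_Xderiv_cofactor (C : idomainType) (u k h : {poly C}) :
  h != 0 -> 'X * u * h^`() = k * h -> exists m : nat, k.[0] = u.[0] *+ m.
Proof.
move=> h_neq0 Eh; have [m [q]] := multiplicity_XsubC h 0.
rewrite h_neq0 polyC0 subr0 /= => q0_neq0 Dh; exists m.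
have Xm_neq0 : 'X^m != 0 :> {poly C} by rewrite expf_neq0 ?polyX_eq0.
have Xderiv_Xm : 'X * ('X^m)^`() = 'X^m *+ m :> {poly C}.
  by case: m {Dh Xm_neq0} => [|m]; rewrite derivXn ?mulr0n ?mulr0 // mulrnAr -exprS.
have /(mulIf Xm_neq0) Eq : u * ('X * q^`() + q *+ m) * 'X^m = k * q * 'X^m.
  rewrite -[RHS]mulrA -Dh -Eh Dh derivM.
  transitivity ('X * u * (q^`() * 'X^m) + u * q * ('X * ('X^m)^`())).
    by rewrite Xderiv_Xm; ring.
  ring.
have /(congr1 (horner^~ 0)) := Eq; rewrite !hornerE /= hornerMn.
by rewrite mulrnAr -mulrnAl => /(mulIf q0_neq0).
Qed.

Lemma irreducible_elt_polyX (A : idomainType) : irreducible_elt ('X : {poly A}).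
Proof.
split; first by rewrite polyX_eq0.
split=> [|g h]; first by rewrite poly_unitE size_polyX.
wlog g1 : g h / size g = 1%N => [hyp DX | DX].
  have : g * h != 0 by rewrite -DX polyX_eq0.
  rewrite mulf_eq0 negb_or => /andP[g_neq0 h_neq0].
  have := size_polyX A; rewrite DX size_mul // -subn1 => size_gh.
  have : size g = 1%N \/ size h = 1%N.
    by move: g_neq0 h_neq0 size_gh; rewrite -!size_poly_gt0; lia.
  case=> [g1 | h1]; first exact: hyp.
  by rewrite mulrC in DX; case: (hyp _ _ h1 DX); [right | left].
left; rewrite poly_unitE g1 /=; apply/unitrPr; exists h`_1.
by have := congr1 (coefp 1) DX; rewrite /= coefX {1}(size1_polyC (eq_leq g1)) coefCM.
Qed.

Lemma irreducible_elt_polyC (A : idomainType) (p : A) :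
  irreducible_elt p -> irreducible_elt p%:P.
Proof.
move=> [p_neq0 [p_nunit p_irr]]; split; first by rewrite polyC_eq0.
split=> [|g h Dp]; first by rewrite poly_unitE coefC (negbTE p_nunit) andbF.
have : size (g * h) == 1%N by rewrite -Dp size_polyC p_neq0.
rewrite size_mul_eq1 => /andP[/eqP/eq_leq/size1_polyC Dg /eqP/eq_leq/size1_polyC Dh].
move: Dp; rewrite {1}Dg {1}Dh -polyCM => /polyC_inj/p_irr[] ?.
  by left; rewrite Dg; apply: rmorph_unit.
by right; rewrite Dh; apply: rmorph_unit.
Qed.

Lemma unit_poly_polyC (C : fieldType) (p : {poly {poly C}}) :
  p \is a GRing.unit -> exists2 a, a != 0 & p = cst2 a.
Proof.
rewrite poly_unitE => /andP[/eqP/eq_leq/size1_polyC Dp].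
rewrite poly_unitE => /andP[/eqP/eq_leq/size1_polyC Dp0].
by rewrite unitfE => ?; exists p`_0`_0; rewrite // /cst2 -Dp0.
Qed.

Lemma irreducible_factor_associate (C : fieldType) (f g p : {poly {poly C}}) :
  irreducible_elt f -> irreducible_elt p -> f = g * p ->
  exists2 a, a != 0 & f = cst2 a * p.
Proof.
move=> [_ [_ f_irr]] [_ [p_nunit _]] Df.
have [/unit_poly_polyC[a a_neq0 Dg] | p_unit] := f_irr _ _ Df.
  by exists a; rewrite // Df Dg.
by rewrite p_unit in p_nunit.
Qed.

(* [Zfield c] is convertible to [lv_field c%:C]. *)
Definition lv_field (C : comNzRingType) (c : C) (f : {poly {poly C}}) :=
  varx C * (1 - vary C + cst2 c * varx C) * dx f + vary C * (-1 + varx C) * dy f.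

Local Notation at_x0 := (map_poly (horner_eval 0)).

Lemma at_x0_eq0_mulx (C : comNzRingType) (f : {poly {poly C}}) :
  at_x0 f = 0 -> f = map_poly (drop_poly 1) f * varx C.
Proof.
move=> fx0; apply/polyP => j; rewrite coefMC coef_map_id0 ?drop_poly0r //.
rewrite -{1}(poly_take_drop 1 f`_j) expr1 -[RHS]add0r; congr (_ + _).
apply/polyP => i; rewrite coef_take_poly coef0; case: i => [|i] //=.
by rewrite -horner_coef0 -horner_evalE -coef_map fx0 coef0.
Qed.

Section LotkaVolterraField.

Variables (C : comNzRingType) (c : C).
Implicit Types f : {poly {poly C}}.

Lemma coef_dx f j : (dx f)`_j = (f`_j)^`().
Proof. by rewrite coef_map_id0 ?deriv0. Qed.

Lemma lv_fieldE f :
  lv_field c f = ('X * (1 + c%:P * 'X))%:P * dx f - 'X * ('X%:P * dx f)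
                 + ('X - 1)%:P * ('X * dy f).
Proof.
by rewrite /lv_field /varx /vary /cst2 !(polyCD, polyCM, polyCN, polyC1); ring.
Qed.

Lemma coef0_lv_field f : (lv_field c f)`_0 = 'X * (1 + c%:P * 'X) * (f`_0)^`().
Proof.
by rewrite lv_fieldE !(coefD, coefN, coefCM, coefXM) coef_dx /= oppr0 mulr0 !addr0.
Qed.

Lemma coefS_lv_field f j :
  (lv_field c f)`_j.+1 = 'X * (1 + c%:P * 'X) * (f`_j.+1)^`() - 'X * (f`_j)^`()
                         + ('X - 1) * (f`_j.+1 *+ j.+1).
Proof. by rewrite lv_fieldE !(coefD, coefN, coefCM, coefXM, coef_dx) /= coef_deriv. Qed.

Lemma size_lv_field f : (size (lv_field c f) <= (size f).+1)%N.
Proof.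
apply/leq_sizeP => -[//|j] /ltnSE f_j; rewrite coefS_lv_field !nth_default //.
  by rewrite !(deriv0, mulr0, mul0rn) subrr addr0.
exact: ltnW.
Qed.

Lemma at_x0_lv_field f : at_x0 (lv_field c f) = - ('X * (at_x0 f)^`()).
Proof.
rewrite /lv_field /varx /vary /cst2 /dy deriv_map.
rewrite !(rmorphD, rmorphB, rmorphM, rmorphN, rmorph1) /= !map_polyC map_polyX /=.
by rewrite !horner_evalE hornerX hornerC polyC0; ring.
Qed.

Lemma lv_field_varx : lv_field c (varx C) = (1 - vary C + cst2 c * varx C) * varx C.
Proof. by rewrite /lv_field /varx /dy /dx map_polyC derivC /= derivX polyC1; ring. Qed.

Lemma lv_field_vary : lv_field c (vary C) = (-1 + varx C) * vary C.
Proof.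
rewrite /lv_field /vary /dy derivX.
have -> : dx ('X : {poly {poly C}}) = 0.
  by apply/polyP => j; rewrite coef_dx coefX coef0; case: (j == 1)%N; rewrite ?derivC.
ring.
Qed.

Lemma lv_cofactor_varx_neq0 : 1 - vary C + cst2 c * varx C != 0.
Proof.
apply/eqP => /(congr1 (coefp 1))/eqP.
rewrite /= coefD coefB coef1 coefX /cst2 /varx -polyCM coefC coef0.
by rewrite sub0r addr0 oppr_eq0 oner_eq0.
Qed.

Lemma lv_cofactor_vary_neq0 : -1 + varx C != 0.
Proof.
apply/eqP => /(congr1 (fun p : {poly {poly C}} => p`_0`_1))/eqP.
rewrite /varx -polyCN -polyC1 -polyCD coefC /= coefD coefN coef1 coefX !coef0 /=.
by rewrite oppr0 add0r oner_eq0.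
Qed.

End LotkaVolterraField.

Section NonDegenerateDarboux.

Variables (C : numFieldType) (c : C) (f k : {poly {poly C}}).
Hypothesis lv_fk : lv_field c f = k * f.
Hypothesis y_ndvd_f : f`_0 != 0.
Hypothesis x_ndvd_f : at_x0 f != 0.

Let f_neq0 : f != 0. Proof. by apply: contraNneq y_ndvd_f => ->; rewrite coef0. Qed.

Let sizef_gt0 : (0 < size f)%N. Proof. by rewrite size_poly_gt0. Qed.

Lemma darboux_at_y0 : 'X * (1 + c%:P * 'X) * (f`_0)^`() = k`_0 * f`_0.
Proof. by rewrite -coef0_lv_field lv_fk coef0M. Qed.

Lemma darboux_at_x0 : 'X * (-1) * (at_x0 f)^`() = at_x0 k * at_x0 f.
Proof. by rewrite -rmorphM /= -lv_fk at_x0_lv_field mulrN1 mulNr. Qed.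

Lemma size_darboux_cofactor : (size k <= 2)%N.
Proof.
have := size_lv_field c f; rewrite lv_fk.
have [-> | k_neq0] := eqVneq k 0; first by rewrite size_poly0.
rewrite size_mul // -subn1; move: k_neq0 f_neq0; rewrite -!size_poly_gt0.
by set n := size f; set m := size k; lia.
Qed.

Lemma darboux_cofactor_x0 : at_x0 k = 0.
Proof.
have [m Em] := horner0_Xderiv_cofactor y_ndvd_f darboux_at_y0.
have [n En] := horner0_Xderiv_cofactor x_ndvd_f darboux_at_x0.
have k_x0_const : (size (at_x0 k) <= 1)%N.
  rewrite -size_polyN; apply: (size_Xderiv_cofactor x_ndvd_f).
  by rewrite mulNr -darboux_at_x0 mulrN1 mulNr opprK.
have k00 : (at_x0 k).[0] = m%:R.
  by rewrite horner_coef0 coef_map /= horner_evalE Em !hornerE.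
have : (m + n)%:R == 0 :> C by rewrite natrD -k00 En !hornerE mulNrn addNr.
rewrite pnatr_eq0 addn_eq0 => /andP[/eqP m0 _].
by rewrite (size1_polyC k_x0_const) -horner_coef0 k00 m0 polyC0.
Qed.

Lemma darboux_lead_coef : 'X * (lead_coef f)^`() = - (k`_1 * lead_coef f).
Proof.
have Dk : k = (k`_0)%:P + (k`_1)%:P * 'X.
  apply/polyP => -[|[|i]]; rewrite coefD coefC coefMX coefC ?addr0 ?add0r //.
  by rewrite nth_default // (leq_trans size_darboux_cofactor).
have := coefS_lv_field c f (size f).-1.
rewrite lv_fk {1}Dk mulrDl -mulrA coefD !coefCM coefXM.
have f_top : f`_(size f) = 0 by rewrite nth_default.
rewrite /= prednK // -lead_coefE f_top deriv0 mul0rn !mulr0 sub0r addr0 add0r.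
by move=> ->; rewrite opprK.
Qed.

Lemma darboux_cofactor_coef1 : k`_1 = 0.
Proof.
have lf_neq0 : lead_coef f != 0 by rewrite lead_coef_eq0.
have /size1_polyC -> : (size (k`_1)%R <= 1)%N.
  rewrite -size_polyN; apply: (size_Xderiv_cofactor lf_neq0).
  by rewrite darboux_lead_coef mulNr.
by rewrite -horner_coef0 -horner_evalE -coef_map darboux_cofactor_x0 coef0 polyC0.
Qed.

Lemma nondegenerate_darboux_unit : f \is a GRing.unit.
Proof.
have /size_deriv_eq0 lf_const : (lead_coef f)^`() = 0.
  apply/eqP; have := darboux_lead_coef.
  by rewrite darboux_cofactor_coef1 mul0r oppr0 => /eqP; rewrite mulf_eq0 polyX_eq0.
have /size_deriv_eq0 fx0_const : (at_x0 f)^`() = 0.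
  apply/eqP; have := darboux_at_x0; rewrite darboux_cofactor_x0 mul0r => /eqP.
  by rewrite mulf_eq0 mulrN1 oppr_eq0 polyX_eq0.
have lf0_neq0 : (lead_coef f)`_0 != 0.
  apply: contraNneq f_neq0 => lf0.
  by rewrite -lead_coef_eq0 (size1_polyC lf_const) lf0 polyC0.
have size_f : size f = 1%N.
  have : ((size f).-1 < size (at_x0 f))%N.
    rewrite ltnNge; apply: contra lf0_neq0 => ?.
    by rewrite -horner_coef0 -horner_evalE -coef_map nth_default.
  by move: fx0_const sizef_gt0; set a := size (at_x0 f); lia.
rewrite poly_unitE size_f /=.
move: lf0_neq0 lf_const; rewrite lead_coefE size_f /= => f00_neq0 f0_const.
rewrite poly_unitE unitfE f00_neq0 andbT eqn_leq f0_const size_poly_gt0.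
by apply: contraNneq f00_neq0 => ->; rewrite coef0.
Qed.

End NonDegenerateDarboux.

Theorem lemma3p2 (R : realType) (c : R) (hc : 0 <= c) :
  (* x and y are irreducible Darboux polynomials with non-zero cofactors *)
  (irreducible_elt (varx R[i]) /\
     exists k, darboux c (varx R[i]) k /\ k != 0) /\
  (irreducible_elt (vary R[i]) /\
     exists k, darboux c (vary R[i]) k /\ k != 0) /\
  (* and they are the only ones, up to non-zero scalar multiples *)
  (forall f k : {poly {poly R[i]}},
     irreducible_elt f -> darboux c f k -> k != 0 ->
     exists a : R[i], a != 0 /\
       (f = cst2 a * varx R[i] \/ f = cst2 a * vary R[i])).
Proof.
have x_irr : irreducible_elt (varx R[i]).
  exact: irreducible_elt_polyC (irreducible_elt_polyX _).
have y_irr : irreducible_elt (vary R[i]) := irreducible_elt_polyX _.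
split; [split=> //; exists (1 - vary R[i] + cst2 c%:C * varx R[i]) |].
  by split; [split; [case: x_irr | exact: lv_field_varx] | exact: lv_cofactor_varx_neq0].
split; [split=> //; exists (-1 + varx R[i]) |].
  by split; [split; [case: y_irr | exact: lv_field_vary] | exact: lv_cofactor_vary_neq0].
move=> f k f_irr [_ lv_fk] _.
have [/eqP f0 | y_ndvd_f] := eqVneq f`_0 0.
  have /factor_theorem[g] : root f 0 by rewrite rootE horner_coef0.
  rewrite polyC0 subr0 => /(irreducible_factor_associate f_irr y_irr)[a a_neq0 Df].
  by exists a; split=> //; right.
have [/at_x0_eq0_mulx | x_ndvd_f] := eqVneq (at_x0 f) 0.
  move=> /(irreducible_factor_associate f_irr x_irr)[a a_neq0 Df].
  by exists a; split=> //; left.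
by case: f_irr => _ [/negP[]]; apply: nondegenerate_darboux_unit lv_fk _ _.
Qed.
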